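(* Let $\lambda\in\mathbb{C}^*$, $\alpha\in\mathbb{C}$, $t\in\{1,-1\}$, and let $\mathcal{M}_t(\lambda,\alpha)$ be the $\mathcal{T}$-module described in the context. Let $\Upsilon_t=\partial^2\mathbb{C}[\partial^2]\oplus\partial\mathbb{C}[\partial^2]\subseteq\mathcal{M}_t(\lambda,0)$. Then: (1) $\mathcal{M}_t(\lambda,\alpha)$ is simple if and only if $\alpha\neq0$. Furthermore, $\Upsilon_t$ is the unique nonzero proper submodule of $\mathcal{M}_t(\lambda,0)$, and $\mathcal{M}_t(\lambda,0)/\Upsilon_t$ is a one-dimensional trivial $\mathcal{T}$-module. (2) $\Upsilon_1\cong\Pi(\mathcal{M}_{-1}(\lambda,\frac12))$ and $\Upsilon_{-1}\cong\Pi(\mathcal{M}_1(\lambda,\frac12))$, and these are simple $\mathcal{T}$-modules.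
   Context: The twisted $N=2$ superconformal algebra $\mathcal{T}$ is the Lie superalgebra over $\mathbb{C}$ with basis $\{L_m, I_r, G_p\mid m\in\mathbb{Z}, r\in\frac12+\mathbb{Z}, p\in\frac12\mathbb{Z}\}$, even part spanned by the $L_m,I_r$, odd part spanned by the $G_p$, and with the only nonzero brackets $[L_m,L_n]=(m-n)L_{m+n}$, $[L_m,I_r]=-rI_{m+r}$, $[L_m,G_p]=(\frac m2-p)G_{m+p}$, $[I_r,G_p]=G_{r+p}$, and $[G_p,G_q]=(-1)^{2p}2L_{p+q}$ if $p+q\in\mathbb{Z}$, $[G_p,G_q]=(-1)^{2p+1}(p-q)I_{p+q}$ if $p+q\in\frac12+\mathbb{Z}$. Modules are $\mathbb{Z}_2$-graded (super)modules; $\Pi$ denotes the parity-change functor (swapping even and odd parts). For $\lambda\in\mathbb{C}^*,\alpha\in\mathbb{C},t=\pm1$, $\mathcal{M}_t(\lambda,\alpha)$ is the space $\mathbb{C}[\partial^2]\oplus\partial\mathbb{C}[\partial^2]$ ($\partial$ a formal variable) with even part $\mathbb{C}[\partial^2]$, odd part $\partial\mathbb{C}[\partial^2]$, and action ($m\in\mathbb{Z}$, $r\in\frac12+\mathbb{Z}$, $p\in\frac12\mathbb{Z}$): $L_mf(\partial^2)=\lambda^m(\partial^2+m\alpha)f(\partial^2+m)$, $L_m\partial f(\partial^2)=\lambda^m(\partial^2+m(\alpha+\frac12))\partial f(\partial^2+m)$, $I_rf(\partial^2)=-2t^{2r}\lambda^{r}\alpha f(\partial^2+r)$, $I_r\partial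 f(\partial^2)=t^{2r}\lambda^{r}(1-2\alpha)\partial f(\partial^2+r)$, $G_pf(\partial^2)=t^{2p}\lambda^p\partial f(\partial^2+p)$, $G_p\partial f(\partial^2)=(-t)^{2p}\lambda^p(\partial^2+2p\alpha)f(\partial^2+p)$. For $p\in\frac12\mathbb{Z}$, $\lambda^p$ means $(\lambda^{1/2})^{2p}$ for a fixed square root $\lambda^{1/2}$. *)

(* Complex numbers are modelled as R[i] (= complex R) for
   R : realType (so R[i] is the field of complex numbers); the generic
   definitions below are stated for an arbitrary field C. *)
From HB Require Import structures.
From mathcomp Require Import all_boot all_order all_algebra.
From mathcomp Require Export complex.
From mathcomp Require Export reals.
Set Implicit Arguments. Unset Strict Implicit. Unset Printing Implicit Defensive.
Import Order.TTheory GRing.Theory Num.Theory.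
Local Open Scope ring_scope.

(* Basis of the twisted N=2 superconformal algebra T:
   TL m  = L_m          (m : int),
   TI k  = I_{k/2}      (k : int, must be odd; see validT),
   TG k  = G_{k/2}      (k : int, arbitrary).  *)
Inductive Tbasis := TL of int | TI of int | TG of int.

Definition validT (b : Tbasis) : bool :=
  match b with TI k => ~~ (2 %| k)%Z | _ => true end.

Section Module.
Variable C : fieldType.

(* The carrier C[d^2] (+) d C[d^2]: a pair (f, g) of polynomials in one
   variable X represents f(d^2) + d g(d^2).  First component = even part,
   second component = odd part. *)
Definition Mcarrier := ({poly C} * {poly C})%type.

Definition shiftp (f : {poly C}) (c : C) : {poly C} := f \Po ('X + c%:P).

Definition halfz (k : int) : C := k%:~R / 2.

(* Action of basis elements on M_t(lambda, alpha), where s is the fixed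
   square root lambda^{1/2} of lambda (so lambda^p = s^(2p)). *)
Definition Mact (t s alpha : C) (b : Tbasis) (v : Mcarrier) : Mcarrier :=
  let: (f, g) := v in
  match b with
  | TL m =>
      ((s ^ (2 * m)) *: (('X + (m%:~R * alpha)%:P) * shiftp f m%:~R),
       (s ^ (2 * m)) *: (('X + (m%:~R * (alpha + 2^-1))%:P) * shiftp g m%:~R))
  | TI k =>
      ((- 2 * t ^ k * s ^ k * alpha) *: shiftp f (halfz k),
       (t ^ k * s ^ k * (1 - 2 * alpha)) *: shiftp g (halfz k))
  | TG k =>
      (((- t) ^ k * s ^ k) *: (('X + (k%:~R * alpha)%:P) * shiftp g (halfz k)),
       (t ^ k * s ^ k) *: shiftp f (halfz k))
  end.

(* A (super)submodule of a module with carrier Mcarrier and action act: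
   a Z2-graded subspace (i.e. W = W_even (+) W_odd) stable under the action
   of every basis element of T. *)
Definition is_submodule (act : Tbasis -> Mcarrier -> Mcarrier)
    (W : Mcarrier -> Prop) : Prop :=
  [/\ W 0,
      (forall u v, W u -> W v -> W (u + v)),
      (forall (c : C) v, W v -> W (c *: v)),
      (forall f g, W (f, g) -> W (f, 0))
    & (forall b v, validT b -> W v -> W (act b v))].

Definition nonzero_subm (W : Mcarrier -> Prop) : Prop := exists v, W v /\ v <> 0.
Definition proper_subm (W : Mcarrier -> Prop) : Prop := exists v, ~ W v.

Definition simple_mod (act : Tbasis -> Mcarrier -> Mcarrier) : Prop :=
  forall W, is_submodule act W -> nonzero_subm W -> forall v, W v.

(* Upsilon = d^2 C[d^2] (+) d C[d^2]. *)
Definition Upsilon (v : Mcarrier) : Prop := 'X %| v.1.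

Definition simple_submod (act : Tbasis -> Mcarrier -> Mcarrier)
    (U : Mcarrier -> Prop) : Prop :=
  forall W, is_submodule act W -> nonzero_subm W -> (forall v, W v -> U v) ->
    forall v, U v -> W v.

Definition quotient_1dim_trivial (act : Tbasis -> Mcarrier -> Mcarrier)
    (U : Mcarrier -> Prop) : Prop :=
  (exists v, ~ U v /\ forall w, exists c : C, U (w - c *: v)) /\
  (forall b v, validT b -> U (act b v)).

(* U (a submodule of the module with action act2) is isomorphic to Pi(M),
   where M has action act1: there is an injective linear map phi from the
   carrier of M onto U, commuting with the action, and mapping the even part
   of M to the odd part of U and the odd part of M to the even part of U
   (so that it is an even isomorphism Pi(M) -> U).  Pi(M) is M with the
   parity swapped and the same action. *)
Definition iso_Pi_sub (act1 act2 : Tbasis -> Mcarrier -> Mcarrier)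
    (U : Mcarrier -> Prop) : Prop :=
  exists phi : Mcarrier -> Mcarrier,
    [/\ (forall (c : C) u v, phi (c *: u + v) = c *: phi u + phi v) /\
        injective phi,
        (forall w, U w <-> exists v, phi v = w),
        (forall f, (phi (f, 0)).1 = 0),
        (forall g, (phi (0, g)).2 = 0)
      & (forall b v, validT b -> phi (act1 b v) = act2 b (phi v))].

End Module.

(* In the basis (f, g) <-> f(d^2) + d g(d^2), the elements L_0, G_0 and I_{1/2}
   act by (f, g) |-> (X f, X g), by (f, g) |-> (X g, f), and by the translation
   X |-> X + 1/2 with factor -2 t lambda^{1/2} alpha on the even part and
   t lambda^{1/2} (1 - 2 alpha) on the odd part.  A subspace of C[X] containing
   a nonzero polynomial and stable under multiplication by X and under a
   nonzero translation is all of C[X].  Hence a nonzero submodule contains the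
   whole even part when alpha <> 0 and the whole odd part when alpha <> 1/2,
   and G_0 moves between the two parts.
   For alpha = 0 every submodule thus contains Upsilon, which has codimension
   one and contains the image of every element of T.  Multiplication by d maps
   Pi(M_{-t}(lambda, 1/2)) isomorphically onto Upsilon in M_t(lambda, 0). *)
From HB Require Import structures.
From mathcomp Require Import all_boot all_order all_algebra.
From mathcomp Require Import complex reals.
From mathcomp Require Import ring.
Import Order.TTheory GRing.Theory Num.Theory.
Local Open Scope ring_scope.
Set Implicit Arguments. Unset Strict Implicit. Unset Printing Implicit Defensive.

Lemma dvdp_Xl (R : idomainType) (p : {poly R}) : ('X %| p) = root p 0.
Proof. by rewrite -dvdp_XsubCl polyC0 subr0. Qed.

Lemma size_sub_lead_lt (R : nzRingType) (p q : {poly R}) : p != 0 ->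
  size q = size p -> lead_coef q = lead_coef p -> (size (q - p)%R < size p)%N.
Proof.
move=> p0 sqp lqp; have sp : (0 < size p)%N by rewrite size_poly_gt0.
rewrite -(prednK sp) ltnS; apply/leq_sizeP => j; rewrite leq_eqVlt coefB.
case/predU1P => [<-|]; first by move: lqp; rewrite /lead_coef sqp => ->; rewrite subrr.
by rewrite prednK // => lt_pj; rewrite !nth_default ?subrr ?sqp.
Qed.

Section Shift.
Variable C : fieldType.
Implicit Types (f : {poly C}) (c : C).

Lemma shiftp0 f : shiftp f 0 = f.
Proof. by rewrite /shiftp addr0 comp_polyXr. Qed.

Lemma horner_shiftp f c x : (shiftp f c).[x] = f.[x + c].
Proof. by rewrite /shiftp horner_comp !hornerE. Qed.

Lemma size_shiftp f c : size (shiftp f c) = size f.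
Proof. by rewrite /shiftp size_comp_poly2 // size_XaddC. Qed.

Lemma lead_coef_shiftp f c : lead_coef (shiftp f c) = lead_coef f.
Proof. by rewrite /shiftp lead_coef_comp ?size_XaddC // lead_coefXaddC expr1n mulr1. Qed.

Lemma size_shiftp_sub_lt f c : f != 0 -> (size (shiftp f c - f)%R < size f)%N.
Proof. by move=> f0; rewrite size_sub_lead_lt ?size_shiftp ?lead_coef_shiftp. Qed.

Lemma shiftpXl f c : shiftp ('X * f) c = ('X + c%:P) * shiftp f c.
Proof. by rewrite /shiftp comp_polyM comp_polyX. Qed.
End Shift.

Section ShiftCharZero.
Variable C : numFieldType.
Implicit Types (f g h : {poly C}) (c : C).

(* [f] takes the value [f.[0]] at the points [c *+ n], which are pairwise
   distinct since [C] has characteristic 0. *)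
Lemma shiftp_fixed_constant f c : c != 0 -> shiftp f c = f -> f = (f.[0])%:P.
Proof.
move=> c0 fixf; apply/eqP; rewrite -subr_eq0; apply/eqP.
set g := f - _; pose rs := [seq c *+ n | n <- iota 0 (size g)].
have f_cn n : f.[c *+ n] = f.[0].
  by elim: n => // n IHn; rewrite -IHn -{2}fixf horner_shiftp mulrSr.
apply: (roots_geq_poly_eq0 (rs := rs)); last by rewrite size_map size_iota.
- by apply/allP => _ /mapP [n _ ->]; rewrite /root /g !hornerE f_cn subrr.
- rewrite map_inj_uniq ?iota_uniq // => m n.
  by rewrite -!(mulr_natr c) => /(mulfI c0)/eqP; rewrite eqr_nat => /eqP.
Qed.

(* The difference operator [f |-> shiftp f c - f] lowers the degree and kills
   only constants, so iterating it on a nonzero [f] reaches a nonzero constant. *)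
Lemma shift_stable_subspace_full (P : {poly C} -> Prop) c : c != 0 ->
  (forall f g, P f -> P g -> P (f + g)) -> (forall a f, P f -> P (a *: f)) ->
  (forall f, P f -> P ('X * f)) -> (forall f, P f -> P (shiftp f c)) ->
  forall f, f != 0 -> P f -> forall h, P h.
Proof.
move=> c0 PD PZ PX PS f f0 Pf.
have P1 : P 1.
  have [n] := ubnP (size f); elim: n f f0 Pf => // n IHn f f0 Pf lt_fn.
  have Pdf : P (shiftp f c - f) by rewrite -scaleN1r; apply: PD; [apply: PS | apply: PZ].
  have [/eqP|df0] := eqVneq (shiftp f c - f) 0; last first.
    by apply: IHn df0 Pdf _; apply: leq_trans (size_shiftp_sub_lt c f0) _.
  rewrite subr_eq0 => /eqP/(shiftp_fixed_constant c0); set a := f.[0] => fE.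
  have a0 : a != 0 by apply: contraNneq f0 => a0; rewrite fE a0.
  by move: (PZ a^-1 _ Pf); rewrite fE -mul_polyC -polyCM mulVf.
elim/poly_ind => [|h a Ph]; first by rewrite -(scale0r 1); apply: PZ.
by apply: PD; [rewrite mulrC; apply: PX | rewrite -alg_polyC; apply: PZ].
Qed.

Lemma halfz1_neq0 : halfz C 1 != 0.
Proof. by rewrite /halfz mulf_neq0 ?invr_eq0 ?pnatr_eq0 ?oner_eq0. Qed.
End ShiftCharZero.

Section Upsilon.
Variable C : fieldType.
Implicit Types (t s : C) (v : Mcarrier C).

Lemma Upsilon_decomp v : Upsilon (v - v.1.[0] *: (1, 0)).
Proof. by rewrite /Upsilon /= alg_polyC dvdp_Xl /root !hornerE subrr. Qed.

Lemma one_notin_Upsilon : ~ Upsilon ((1, 0) : Mcarrier C).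
Proof. by rewrite /Upsilon /= dvdp1 size_polyX. Qed.

Lemma Mact0_Upsilon t s b v : Upsilon (Mact t s 0 b v).
Proof.
rewrite /Upsilon; case: b v => [m|k|k] [f g] /=; rewrite mulr0 ?scale0r ?dvdp0 //;
  by rewrite addr0 -mul_polyC dvdp_mull // dvdp_mulIl.
Qed.

Lemma Upsilon_submodule t s : is_submodule (Mact t s 0) (@Upsilon C).
Proof.
split=> [|u v|c v|//|b v _ _]; rewrite /Upsilon //=.
- exact: dvdp_add.
- by rewrite -mul_polyC; apply: dvdp_mull.
- exact: Mact0_Upsilon.
Qed.

Lemma Upsilon_nonzero : nonzero_subm (@Upsilon C).
Proof.
by exists (0, 1); split; [apply: dvdp0 | move/(congr1 snd)/eqP; rewrite oner_eq0].
Qed.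

Lemma Upsilon_proper : proper_subm (@Upsilon C).
Proof. by exists (1, 0); apply: one_notin_Upsilon. Qed.

Lemma Upsilon_quotient t s : quotient_1dim_trivial (Mact t s 0) (@Upsilon C).
Proof.
split=> [|b v _]; last exact: Mact0_Upsilon.
exists (1, 0); split=> [|w]; first exact: one_notin_Upsilon.
by exists w.1.[0]; apply: Upsilon_decomp.
Qed.
End Upsilon.

Section Submodule.
Variables (C : fieldType) (act : Tbasis -> Mcarrier C -> Mcarrier C).
Variable W : Mcarrier C -> Prop.
Hypothesis W_sub : is_submodule act W.
Implicit Types (f g : {poly C}) (v : Mcarrier C).

Lemma submodD u v : W u -> W v -> W (u + v).
Proof. by case: W_sub => _ + _ _ _; apply. Qed.

Lemma submodZ c v : W v -> W (c *: v).
Proof. by case: W_sub => _ _ + _ _; apply. Qed.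

Lemma submod_act b v : validT b -> W v -> W (act b v).
Proof. by case: W_sub => _ _ _ _; apply. Qed.

Lemma submod_even f g : W (f, g) -> W (f, 0).
Proof. by case: W_sub => _ _ _ + _; apply. Qed.

Lemma submod_odd f g : W (f, g) -> W (0, g).
Proof.
move=> Wfg; have := submodD Wfg (submodZ (-1) (submod_even Wfg)).
by rewrite scaleN1r; congr W; congr pair; rewrite /= (subrr, subr0).
Qed.

Lemma submod_pair f g : W (f, 0) -> W (0, g) -> W (f, g).
Proof.
by move=> Wf Wg; have := submodD Wf Wg; congr W; congr pair; rewrite /= (addr0, add0r).
Qed.

Lemma submod_evenD f g : W (f, 0) -> W (g, 0) -> W (f + g, 0).
Proof. by move=> Wf Wg; have := submodD Wf Wg; congr W; congr pair; rewrite /= addr0. Qed.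

Lemma submod_oddD f g : W (0, f) -> W (0, g) -> W (0, f + g).
Proof. by move=> Wf Wg; have := submodD Wf Wg; congr W; congr pair; rewrite /= addr0. Qed.

Lemma submod_evenZ c f : W (f, 0) -> W (c *: f, 0).
Proof. by move/(submodZ c); congr W; congr pair; rewrite /= scaler0. Qed.

Lemma submod_oddZ c f : W (0, f) -> W (0, c *: f).
Proof. by move/(submodZ c); congr W; congr pair; rewrite /= scaler0. Qed.

(* [Upsilon] has codimension one, with complement spanned by [(1, 0)]. *)
Lemma Upsilon_maximal v : (forall u, Upsilon u -> W u) -> W v -> ~ Upsilon v ->
  forall w, W w.
Proof.
move=> UW Wv NUv w; have v00 : v.1.[0] != 0.
  apply: contra_notN NUv => /eqP v00.
  by have := Upsilon_decomp v; rewrite v00 scale0r subr0.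
have W10 : W (1, 0).
  have := submodZ v.1.[0]^-1 (submodD Wv (submodZ (-1) (UW _ (Upsilon_decomp v)))).
  by rewrite scaleN1r opprB addrC subrK scalerA mulVf ?scale1r.
rewrite -(subrK (w.1.[0] *: (1, 0)) w).
exact: submodD (UW _ (Upsilon_decomp w)) (submodZ _ W10).
Qed.
End Submodule.

Section Generators.
Variables (C : fieldType) (t s a : C).
Implicit Types f g : {poly C}.

Lemma Mact_L0 f g : Mact t s a (TL 0) (f, g) = ('X * f, 'X * g).
Proof. by rewrite /= mulr0 expr0z !scale1r !mul0r !polyC0 !addr0 !shiftp0. Qed.

Lemma Mact_G0 f g : Mact t s a (TG 0) (f, g) = ('X * g, f).
Proof. by rewrite /= !expr0z mulr1 !scale1r mul0r addr0 /halfz mul0r !shiftp0. Qed.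

Lemma Mact_I1 f g : Mact t s a (TI 1) (f, g) =
  ((-2 * t * s * a) *: shiftp f (halfz C 1), (t * s * (1 - 2 * a)) *: shiftp g (halfz C 1)).
Proof. by rewrite /= !expr1z. Qed.
End Generators.

Section MactSubmodule.
Variables (C : numFieldType) (t s a : C) (W : Mcarrier C -> Prop).
Hypothesis W_sub : is_submodule (Mact t s a) W.
Hypotheses (t0 : t != 0) (s0 : s != 0) (W_nz : nonzero_subm W).
Implicit Types f g h : {poly C}.

Lemma submod_L0 f g : W (f, g) -> W ('X * f, 'X * g).
Proof. by move=> Wfg; rewrite -(Mact_L0 t s a); apply: (submod_act W_sub) Wfg. Qed.

Lemma submod_G0 f g : W (f, g) -> W ('X * g, f).
Proof. by move=> Wfg; rewrite -(Mact_G0 t s a); apply: (submod_act W_sub) Wfg. Qed.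

Lemma submod_even_shift f : a != 0 -> W (f, 0) -> W (shiftp f (halfz C 1), 0).
Proof.
move=> a0 /(submod_act W_sub (b := TI 1) isT); rewrite Mact_I1 => /(submod_even W_sub).
move/(submod_evenZ W_sub (-2 * t * s * a)^-1); rewrite scalerA mulVf ?scale1r //.
by rewrite !mulf_neq0 ?oppr_eq0 ?pnatr_eq0.
Qed.

Lemma submod_odd_shift f : 2 * a != 1 -> W (0, f) -> W (0, shiftp f (halfz C 1)).
Proof.
move=> a2 /(submod_act W_sub (b := TI 1) isT); rewrite Mact_I1 => /(submod_odd W_sub).
move/(submod_oddZ W_sub (t * s * (1 - 2 * a))^-1); rewrite scalerA mulVf ?scale1r //.
by rewrite !mulf_neq0 // subr_eq0 eq_sym.
Qed.

Lemma submod_odd_nonzero : exists2 g : {poly C}, g != 0 & W (0, g).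
Proof.
case: W_nz => -[f g] [Wfg fg0]; have [f0|f0] := eqVneq f 0.
  exists g; last by apply: (submod_odd W_sub Wfg).
  by apply/eqP => g0; apply: fg0; rewrite f0 g0.
by exists f => //; have := submod_G0 (submod_even W_sub Wfg); rewrite mulr0.
Qed.

Lemma submod_even_full : a != 0 -> forall h, W (h, 0).
Proof.
move=> a0; have [f f0 Wf] := submod_odd_nonzero.
apply: (@shift_stable_subspace_full C (fun h => W (h, 0)) _ (halfz1_neq0 C)
          _ _ _ _ ('X * f)).
- exact: submod_evenD W_sub.
- exact: submod_evenZ W_sub.
- by move=> h /submod_L0 /(submod_even W_sub).
- by move=> h; apply: submod_even_shift.
- by rewrite mulf_neq0 ?polyX_eq0.
- exact: submod_G0 Wf.
Qed.

Lemma submod_odd_full : 2 * a != 1 -> forall h, W (0, h).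
Proof.
move=> a2; have [f f0 Wf] := submod_odd_nonzero.
apply: (@shift_stable_subspace_full C (fun h => W (0, h)) _ (halfz1_neq0 C)
          _ _ _ _ f f0 Wf).
- exact: submod_oddD W_sub.
- exact: submod_oddZ W_sub.
- by move=> h /submod_L0 /(submod_odd W_sub).
- by move=> h; apply: submod_odd_shift.
Qed.

Lemma submod_full : a != 0 -> forall v, W v.
Proof.
move=> a0 [f g]; apply: (submod_pair W_sub); first exact: submod_even_full.
by have := submod_G0 (submod_even_full a0 g); rewrite mulr0.
Qed.

Lemma Upsilon_sub_submod : 2 * a != 1 -> forall v, Upsilon v -> W v.
Proof.
move=> a2 [f g] /= Xf; apply: (submod_pair W_sub); last exact: submod_odd_full.
by have := submod_G0 (submod_odd_full a2 (f %/ 'X)); rewrite mulrC divpK.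
Qed.
End MactSubmodule.

Section Simplicity.
Variables (C : numFieldType) (t s : C).
Hypotheses (t0 : t != 0) (s0 : s != 0).

Let two_mul0_neq1 : 2 * 0 != 1 :> C.
Proof. by rewrite mulr0 eq_sym oner_eq0. Qed.

Lemma Mact_simple_iff a : simple_mod (Mact t s a) <-> a != 0.
Proof.
split=> [simpleM | a0 W W_sub W_nz]; last exact: submod_full W_sub t0 s0 W_nz a0.
apply/eqP => a0; subst a; case: (Upsilon_proper C) => v; apply.
exact: simpleM (Upsilon_submodule t s) (Upsilon_nonzero C) v.
Qed.

Lemma Upsilon_unique W : is_submodule (Mact t s 0) W -> nonzero_subm W ->
  proper_subm W -> forall v, W v <-> Upsilon v.
Proof.
move=> W_sub W_nz [w NWw] v.
have UW := Upsilon_sub_submod W_sub t0 s0 W_nz two_mul0_neq1.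
split=> [Wv|/UW //]; apply/idPn => /negP NUv.
exact: NWw (Upsilon_maximal W_sub UW Wv NUv w).
Qed.

Lemma Upsilon_simple : simple_submod (Mact t s 0) (@Upsilon C).
Proof.
by move=> W W_sub W_nz _; apply: Upsilon_sub_submod W_sub t0 s0 W_nz two_mul0_neq1.
Qed.
End Simplicity.

Lemma oppr_exprz_odd (R : numFieldType) (x : R) (k : int) :
  ~~ (2 %| k)%Z -> (- x) ^ k = - x ^ k.
Proof. by rewrite dvdzE dvdn2 negbK => ok; rewrite expNrz expN1r -signr_odd ok mulN1r. Qed.

Section PiIsomorphism.
Variables (C : numFieldType) (t s : C).

(* Multiplication by [d]: [f(d^2) + d g(d^2) |-> d^2 g(d^2) + d f(d^2)]. *)
Definition Xswap (v : Mcarrier C) : Mcarrier C := ('X * v.2, v.1).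

Lemma Xswap_equivariant b v : validT b ->
  Xswap (Mact (- t) s 2^-1 b v) = Mact t s 0 b (Xswap v).
Proof.
have half_half : 2^-1 + 2^-1 = 1 :> C by rewrite [RHS]splitr mul1r.
case: b v => [m|k|k] [f g] /= b_ok; congr pair => /=.
- by rewrite shiftpXl half_half mulr1 -scalerAr mulr0 addr0.
- by rewrite add0r.
- by rewrite !mulr0 scale0r -scalerAr [X in X *: _](_ : _ = 0) ?scale0r //; field.
- by rewrite oppr_exprz_odd //; congr (_ *: _); field.
- by rewrite mulr0 addr0 -scalerAr.
- by rewrite opprK shiftpXl.
Qed.

Lemma Upsilon_iso_Pi : iso_Pi_sub (Mact (- t) s 2^-1) (Mact t s 0) (@Upsilon C).
Proof.
exists Xswap; split=> //; last exact: Xswap_equivariant.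
- split=> [c u v | [f g] [f' g'] [/mulfI Xg fE]].
    by congr pair; rewrite /= mulrDr scalerAr.
  by rewrite fE Xg // polyX_eq0.
- move=> [f g]; split=> [Xf | [[f' g'] [<- _]]]; last exact: dvdp_mulIl.
  by exists (g, f %/ 'X); rewrite /Xswap /= mulrC divpK.
- by move=> f; rewrite /= mulr0.
Qed.
End PiIsomorphism.

Local Open Scope complex_scope.
Theorem theorem2p5 (R : realType) (lambda s alpha t : R[i]) :
  lambda != 0 -> s * s = lambda -> (t = 1 \/ t = -1) ->
  (* (1) *)
  (simple_mod (Mact t s alpha) <-> alpha != 0) /\
  (is_submodule (Mact t s 0) (@Upsilon R[i]) /\
   nonzero_subm (@Upsilon R[i]) /\ proper_subm (@Upsilon R[i]) /\
   (forall W, is_submodule (Mact t s 0) W -> nonzero_subm W -> proper_subm W ->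
      forall v, W v <-> @Upsilon R[i] v) /\
   quotient_1dim_trivial (Mact t s 0) (@Upsilon R[i])) /\
  (* (2) *)
  (iso_Pi_sub (Mact (-1) s (2^-1)) (Mact 1 s 0) (@Upsilon R[i]) /\
   iso_Pi_sub (Mact 1 s (2^-1)) (Mact (-1) s 0) (@Upsilon R[i]) /\
   simple_submod (Mact 1 s 0) (@Upsilon R[i]) /\
   simple_submod (Mact (-1) s 0) (@Upsilon R[i])).
Proof.
move=> l0 ss ht.
have s0 : s != 0 by apply: contraNneq l0 => s0; rewrite -ss s0 mul0r.
have N10 : - 1 != 0 :> R[i] by rewrite oppr_eq0 oner_eq0.
have t0 : t != 0 by case: ht => ->; rewrite ?N10 ?oner_eq0.
split; first exact: Mact_simple_iff t0 s0 alpha.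
split.
- split; first exact: Upsilon_submodule.
  split; first exact: Upsilon_nonzero.
  split; first exact: Upsilon_proper.
  split; [exact: Upsilon_unique t0 s0 | exact: Upsilon_quotient].
- split; first exact: Upsilon_iso_Pi.
  split; first by have := Upsilon_iso_Pi (- 1) s; rewrite opprK.
  by split; apply: Upsilon_simple; rewrite ?N10 ?oner_eq0.
Qed.
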